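(* Let $H, W \ge 1$ be integers and $L=HW$. For each $s \in \{0,1,\dots,H+W-2\}$ let $i_{\min}(s)=\max(0,\,s-(W-1))$ and $i_{\max}(s)=\min(s,\,H-1)$. Let $\mathbf{d}^{(s)}$ be the ordered list of points $(i,\,s-i)$ and $\mathbf{a}^{(s)}$ the ordered list of points $(i,\,W-1-(s-i))$, in both cases for $i=i_{\min}(s),\dots,i_{\max}(s)$ in increasing order. Set $\operatorname{diag}(s)=\mathbf{d}^{(s)}$, $\operatorname{antidiag}(s)=\mathbf{a}^{(s)}$ for $s$ even and $\operatorname{diag}(s)=\operatorname{reverse}(\mathbf{d}^{(s)})$, $\operatorname{antidiag}(s)=\operatorname{reverse}(\mathbf{a}^{(s)})$ for $s$ odd. Let $\mathbf{i}_{\text{diag}}$, $\mathbf{i}_{\text{antidiag}}\in\mathbb{Z}^L$ be obtained by concatenating $\operatorname{diag}(s)$, resp. $\operatorname{antidiag}(s)$, over $s=0,\dots,H+W-2$ and replacing each point $(i,j)$ by $iW+j$. Let $\mathbf{I}_{\text{fwd}}\in\mathbb{Z}^{4\times L}$ have rows $\mathbf{i}_{\text{diag}}$, $\mathbf{i}_{\text{antidiag}}$, $\operatorname{flip}(\mathbf{i}_{\text{diag}})$, $\operatorname{flip}(\mathbf{i}_{\text{antidiag}})$ (indexed $k=0,1,2,3$), and let $\mathbf{I}_{\text{inv}}\in\mathbb{Z}^{4\times L}$ be defined by $\mathbf{I}_{\text{inv}}[k,\mathbf{I}_{\text{fwd}}[k,j]]=j$ for all $k\in\{0,1,2,3\}$,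 $j\in\{0,\dots,L-1\}$. Let $\mathbf{z}\in\mathbb{R}^L$ be any vector and for each $k$ define $\mathbf{z}^{\text{scan}}_k\in\mathbb{R}^L$ by $\mathbf{z}^{\text{scan}}_k[j]=\mathbf{z}[\mathbf{I}_{\text{fwd}}[k,j]]$. Then for every $k\in\{0,1,2,3\}$ and every $\ell\in\{0,\dots,L-1\}$, $\mathbf{z}^{\text{scan}}_k[\mathbf{I}_{\text{inv}}[k,\ell]]=\mathbf{z}[\ell]$; that is, $\mathbf{z}^{\text{scan}}_k[\mathbf{I}_{\text{inv}}[k,:]]=\mathbf{z}$.
   Context: The grid is $\{0,\dots,H-1\}\times\{0,\dots,W-1\}$ with points $(i,j)$; $iW+j$ is the row-major (raster) index. $\operatorname{reverse}$ and $\operatorname{flip}$ reverse the order of a finite sequence. Vectors of length $L$ are indexed by $\{0,\dots,L-1\}$, and $\mathbf{v}[\mathbf{u}]$ for an index vector $\mathbf{u}$ denotes the vector with entries $\mathbf{v}[\mathbf{u}[j]]$. *)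

From mathcomp Require Import all_boot all_order all_algebra.
From mathcomp Require Import reals.
Set Implicit Arguments. Unset Strict Implicit. Unset Printing Implicit Defensive.

(* Grid points (i,j) are pairs of naturals; nat subtraction is truncated, so
   [s - (W-1)] is max(0, s-(W-1)). *)
Definition imin (W s : nat) : nat := s - (W - 1).
Definition imax (H s : nat) : nat := minn s (H - 1).

Definition irange (H W s : nat) : seq nat := iota (imin W s) ((imax H s).+1 - imin W s).

Definition dpts (H W s : nat) : seq (nat * nat) :=
  [seq (i, s - i) | i <- irange H W s].
Definition apts (H W s : nat) : seq (nat * nat) :=
  [seq (i, W - 1 - (s - i)) | i <- irange H W s].

Definition diag (H W s : nat) : seq (nat * nat) :=
  if odd s then rev (dpts H W s) else dpts H W s.
Definition antidiag (H W s : nat) : seq (nat * nat) :=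
  if odd s then rev (apts H W s) else apts H W s.

Definition raster (W : nat) (p : nat * nat) : nat := p.1 * W + p.2.

Definition i_diag (H W : nat) : seq nat :=
  flatten [seq [seq raster W p | p <- diag H W s] | s <- iota 0 (H + W - 1)].
Definition i_antidiag (H W : nat) : seq nat :=
  flatten [seq [seq raster W p | p <- antidiag H W s] | s <- iota 0 (H + W - 1)].

Definition I_fwd (H W k : nat) : seq nat :=
  nth [::] [:: i_diag H W; i_antidiag H W; rev (i_diag H W); rev (i_antidiag H W)] k.

Definition z_scan {R : realType} (H W : nat) (z : seq R) (k : nat) : seq R :=
  [seq nth 0%R z i | i <- I_fwd H W k].

From mathcomp Require Import all_boot all_order all_algebra.
From mathcomp Require Import reals.
From mathcomp Require Import zify.

Set Implicit Arguments.
Unset Strict Implicit.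
Unset Printing Implicit Defensive.

(* Every row of [I_fwd] is a permutation of [0, ..., HW-1]: the blocks [diag s]
   (resp. [antidiag s]) enumerate without repetition the level sets of
   i + j (resp. i + (W-1-j)) on the grid, and the raster index maps the grid
   bijectively onto [0, ..., HW-1].  Hence [I_inv k] agrees on [0, ..., HW-1]
   with the inverse permutation, i.e. with [index _ (I_fwd k)], and gathering
   through a permutation and then through its inverse is the identity. *)

Lemma perm_flatten_levels (T : eqType) (lvl : T -> nat) (B : nat -> seq T)
    (A : seq T) (N : nat) :
  uniq A -> (forall s, uniq (B s)) ->
  (forall s x, (x \in B s) = (x \in A) && (lvl x == s)) ->
  {in A, forall x, lvl x < N} ->
  perm_eq (flatten [seq B s | s <- iota 0 N]) A.
Proof.
move=> uA uB memB ltN.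
apply/allP => x _; apply/eqP.
rewrite count_flatten -map_comp count_uniq_mem //.
under eq_map => s do rewrite /= count_uniq_mem // memB.
rewrite sumn_count; have [xA | _] /= := boolP (x \in A); last by rewrite count_pred0.
rewrite (@eq_count _ _ (pred1 (lvl x))) => [|s]; last by rewrite /= eq_sym.
by rewrite count_uniq_mem ?iota_uniq // mem_iota ltN.
Qed.

Lemma nth_scan_inv (T : Type) (x0 : T) (n : nat) (s : seq nat)
    (inv : nat -> nat) (z : seq T) :
  perm_eq s (iota 0 n) -> (forall j, j < n -> inv (nth 0 s j) = j) ->
  forall l, l < n -> nth x0 [seq nth x0 z i | i <- s] (inv l) = nth x0 z l.
Proof.
move=> sP invK l ltln.
have sizes : size s = n by rewrite (perm_size sP) size_iota.
have ls : l \in s by rewrite (perm_mem sP) mem_iota.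
have <- : index l s = inv l by rewrite -{2}(nth_index 0 ls) invK // -sizes index_mem.
by rewrite (nth_map 0) ?index_mem // nth_index.
Qed.

Definition grid (H W : nat) : seq (nat * nat) :=
  [seq (i, j) | i <- iota 0 H, j <- iota 0 W].

Lemma mem_grid H W p : (p \in grid H W) = (p.1 < H) && (p.2 < W).
Proof.
apply/allpairsP/andP => [[[i j] [/= + + ->]] | [ltH ltW]]; first by rewrite !mem_iota.
by exists p; rewrite !mem_iota -surjective_pairing ltH ltW.
Qed.

Lemma grid_uniq H W : uniq (grid H W).
Proof. by rewrite allpairs_uniq ?iota_uniq // => -[? ?] [? ?]. Qed.

Lemma raster_grid H W : [seq raster W p | p <- grid H W] = iota 0 (H * W).
Proof.
elim: H => [|H IH] //.
rewrite /grid -addn1 iotaD allpairs_cat map_cat allpairs1l IH -map_comp.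
rewrite mulnDl mul1n iotaD.
congr (_ ++ _); rewrite -(addn0 (0 + H * W)) iotaDl.
by apply: eq_map => j; rewrite /= /raster add0n.
Qed.

Lemma perm_raster_levels H W N (lvl : nat * nat -> nat)
    (B : nat -> seq (nat * nat)) :
  (forall s, uniq (B s)) ->
  (forall s p, (p \in B s) = (p \in grid H W) && (lvl p == s)) ->
  {in grid H W, forall p, lvl p < N} ->
  perm_eq (flatten [seq [seq raster W p | p <- B s] | s <- iota 0 N])
          (iota 0 (H * W)).
Proof.
move=> uB memB ltN; rewrite -raster_grid.
have -> : flatten [seq [seq raster W p | p <- B s] | s <- iota 0 N] =
          [seq raster W p | p <- flatten [seq B s | s <- iota 0 N]].
  by rewrite map_flatten -map_comp.
exact/perm_map/perm_flatten_levels/ltN/memB/uB/grid_uniq.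
Qed.

Lemma mem_irange H W s i :
  (i \in irange H W s) = (s - (W - 1) <= i <= minn s (H - 1)).
Proof. by rewrite mem_iota /imin /imax; lia. Qed.

Lemma dpts_uniq H W s : uniq (dpts H W s).
Proof. by rewrite map_inj_uniq ?iota_uniq // => i j [->]. Qed.

Lemma apts_uniq H W s : uniq (apts H W s).
Proof. by rewrite map_inj_uniq ?iota_uniq // => i j [->]. Qed.

Lemma diag_uniq H W s : uniq (diag H W s).
Proof. by rewrite /diag fun_if rev_uniq if_same dpts_uniq. Qed.

Lemma antidiag_uniq H W s : uniq (antidiag H W s).
Proof. by rewrite /antidiag fun_if rev_uniq if_same apts_uniq. Qed.

Section Scans.
Variables H W : nat.
Hypotheses (H_gt0 : 0 < H) (W_gt0 : 0 < W).

Lemma mem_dpts s p : (p \in dpts H W s) = (p \in grid H W) && (p.1 + p.2 == s).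
Proof.
rewrite mem_grid; case: p => i j /=; apply/mapP/idP => [[i' + [-> ->]] | ij_s].
  by rewrite mem_irange; lia.
by exists i; rewrite ?mem_irange; [lia | congr pair; lia].
Qed.

Lemma mem_apts s p :
  (p \in apts H W s) = (p \in grid H W) && (p.1 + (W - 1 - p.2) == s).
Proof.
rewrite mem_grid; case: p => i j /=; apply/mapP/idP => [[i' + [-> ->]] | ij_s].
  by rewrite mem_irange; lia.
by exists i; rewrite ?mem_irange; [lia | congr pair; lia].
Qed.

Lemma mem_diag s p : (p \in diag H W s) = (p \in grid H W) && (p.1 + p.2 == s).
Proof. by rewrite /diag; case: ifP; rewrite ?mem_rev mem_dpts. Qed.

Lemma mem_antidiag s p :
  (p \in antidiag H W s) = (p \in grid H W) && (p.1 + (W - 1 - p.2) == s).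
Proof. by rewrite /antidiag; case: ifP; rewrite ?mem_rev mem_apts. Qed.

Lemma i_diag_perm : perm_eq (i_diag H W) (iota 0 (H * W)).
Proof.
apply: (perm_raster_levels (diag_uniq H W) mem_diag) => -[i j].
by rewrite mem_grid /=; lia.
Qed.

Lemma i_antidiag_perm : perm_eq (i_antidiag H W) (iota 0 (H * W)).
Proof.
apply: (perm_raster_levels (antidiag_uniq H W) mem_antidiag) => -[i j].
by rewrite mem_grid /=; lia.
Qed.

Lemma I_fwd_perm k : k < 4 -> perm_eq (I_fwd H W k) (iota 0 (H * W)).
Proof.
case: k => [|[|[|[|k]]]] // _; rewrite /I_fwd /= ?perm_rev.
all: by [apply: i_diag_perm | apply: i_antidiag_perm].
Qed.
End Scans.

Theorem mainTheorem3 (R : realType) (H W : nat) (hH : 1 <= H) (hW : 1 <= W)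
  (I_inv : nat -> nat -> nat)
  (hinv : forall k j, k < 4 -> j < H * W ->
            I_inv k (nth 0 (I_fwd H W k) j) = j)
  (z : seq R) (hz : size z = H * W) :
  forall k l, k < 4 -> l < H * W ->
    nth 0%R (z_scan H W z k) (I_inv k l) = nth 0%R z l.
Proof.
move=> k l hk hl; rewrite /z_scan.
exact: nth_scan_inv (I_fwd_perm hH hW hk) (fun j => hinv k j hk) l hl.
Qed.
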